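(* Let $K$ be a field of characteristic zero, $x=(x_1,\dots,x_n)$, and let $f\in K[x]$ with $\deg f\neq 1$. Fix an index $i$ and suppose that $h:=f-x_i$ is a polynomial in a linear form, i.e. $h=q(\ell)$ for some $q\in K[t]$ and some linear form $\ell\in K[x]$. If $h\in K[x_i]$, then $f$ is not a component of a Keller map. If $h\notin K[x_i]$, then $f$ is a tame coordinate.
   Context: A Keller map is a polynomial map $F\in K[x]^n$ with $\det\mathcal{J}F\in K^{*}$. A polynomial $f$ is a tame coordinate if it is a component of a tame automorphism of $K[x]$, i.e. of an invertible polynomial map that is a composition of invertible linear (affine) maps and elementary maps $(x_1+p(x_2,\dots,x_n),x_2,\dots,x_n)$. *)

From HB Require Import structures.
From mathcomp Require Import all_boot all_order all_algebra.
From mathcomp Require Import mpoly.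
Set Implicit Arguments. Unset Strict Implicit. Unset Printing Implicit Defensive.
Import Order.TTheory GRing.Theory.
Local Open Scope ring_scope.

Definition polymap (K : fieldType) (n : nat) := n.-tuple {mpoly K[n]}.

Definition pm_comp (K : fieldType) (n : nat) (F G : polymap K n) : polymap K n :=
  [tuple (tnth F a) \mPo G | a < n].

Definition pm_id (K : fieldType) (n : nat) : polymap K n :=
  [tuple 'X_a | a < n].

Definition jacobian (K : fieldType) (n : nat) (F : polymap K n)
  : 'M[{mpoly K[n]}]_n :=
  \matrix_(a < n, b < n) (tnth F a)^`M(b).

Definition keller (K : fieldType) (n : nat) (F : polymap K n) : Prop :=
  exists c : K, c != 0 /\ \det (jacobian F) = c%:MP.

Definition keller_component (K : fieldType) (n : nat) (f : {mpoly K[n]}) : Prop :=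
  exists (F : polymap K n) (j : 'I_n), keller F /\ tnth F j = f.

Definition affine_aut (K : fieldType) (n : nat) (F : polymap K n) : Prop :=
  exists (A : 'M[K]_n) (c : 'I_n -> K), A \in unitmx /\
    F = [tuple \sum_(b < n) A a b *: 'X_b + (c a)%:MP | a < n].

(* Elementary map: x_k |-> x_k + p(the other variables), x_a |-> x_a (a != k). *)
Definition elementary (K : fieldType) (n : nat) (F : polymap K n) : Prop :=
  exists (k : 'I_n) (p : {mpoly K[n]}),
    (forall m, m \in msupp p -> m k = 0%N) /\
    F = [tuple (if a == k then 'X_a + p else 'X_a) | a < n].

Inductive tame (K : fieldType) (n : nat) : polymap K n -> Prop :=
  | tame_id : tame (pm_id K n)
  | tame_aff G E : tame G -> affine_aut E -> tame (pm_comp G E)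
  | tame_elem G E : tame G -> elementary E -> tame (pm_comp G E).

Definition tame_coordinate (K : fieldType) (n : nat) (f : {mpoly K[n]}) : Prop :=
  exists (F : polymap K n) (j : 'I_n), tame F /\ tnth F j = f.

Definition usubst (K : fieldType) (n : nat) (q : {poly K}) (l : {mpoly K[n]})
  : {mpoly K[n]} := \sum_(j < size q) q`_j *: l ^+ j.

Definition in_Kxi (K : fieldType) (n : nat) (i : 'I_n) (h : {mpoly K[n]}) : Prop :=
  exists q : {poly K}, h = usubst q 'X_i.

From HB Require Import structures.
From mathcomp Require Import all_boot all_order all_algebra.
From mathcomp Require Import mpoly.
Import GRing.Theory.
Local Open Scope ring_scope.
Set Implicit Arguments. Unset Strict Implicit. Unset Printing Implicit Defensive.

(* If h = f - x_i lies in K[x_i], then so does f, so its row of the Jacobian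
   has the single nonzero entry d f / d x_i; as the determinant is a nonzero
   constant, this derivative is a unit of K[x], i.e. a nonzero constant, and in
   characteristic zero deg f = 1.  Otherwise the linear form is l = c (x_j + p)
   with j <> i, c <> 0 and p free of x_j, and f = x_i + q(c (x_j + p)) is the
   i-th component of the composite of the elementary maps
   x_i |-> x_i + q(c x_j) and x_j |-> x_j + p. *)

Section UnivariateSubstitution.
Variables (K : fieldType) (n : nat).

Lemma usubst_widen (q : {poly K}) (l : {mpoly K[n]}) N : (size q <= N)%N ->
  usubst q l = \sum_(k < N) q`_k *: l ^+ k.
Proof.
move=> le_qN; rewrite /usubst (big_ord_widen _ (fun k => q`_k *: l ^+ k) le_qN).
rewrite big_mkcond /=; apply: eq_bigr => k _.
by case: ifP => // /negbT; rewrite -leqNgt => /(nth_default 0) ->; rewrite scale0r.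
Qed.

Lemma usubstD (p q : {poly K}) (l : {mpoly K[n]}) :
  usubst (p + q) l = usubst p l + usubst q l.
Proof.
pose N := maxn (size p) (size q).
rewrite !(@usubst_widen _ _ N) ?leq_maxl ?leq_maxr //; last first.
  exact: leq_trans (size_polyD p q) _.
by rewrite -big_split; apply: eq_bigr => k _; rewrite coefD scalerDl.
Qed.

Lemma usubstX (l : {mpoly K[n]}) : usubst 'X l = l.
Proof.
rewrite /usubst size_polyX big_ord_recr big_ord1 /= !coefX /=.
by rewrite scale0r add0r scale1r expr1.
Qed.

Lemma usubstZ (q : {poly K}) (a : K) (l : {mpoly K[n]}) :
  usubst q (a *: l) = usubst (\poly_(k < size q) (q`_k * a ^+ k)) l.
Proof.
rewrite [RHS](usubst_widen _ (size_poly _ _)); apply: eq_bigr => k _.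
by rewrite coef_poly ltn_ord exprZn scalerA.
Qed.

Lemma comp_usubst (q : {poly K}) (l : {mpoly K[n]}) (lq : n.-tuple {mpoly K[n]}) :
  usubst q l \mPo lq = usubst q (l \mPo lq).
Proof.
rewrite /usubst raddf_sum; apply: eq_bigr => k _.
by rewrite /= comp_mpolyZ rmorphXn.
Qed.

Lemma mderivX_neq (a b : 'I_n) : a != b -> ('X_a : {mpoly K[n]})^`M(b) = 0.
Proof. by move=> ab; rewrite mderivX mnm1E (negbTE ab) scale0r. Qed.

Lemma mderiv_usubstX_neq (q : {poly K}) (a b : 'I_n) : a != b ->
  (usubst q ('X_a : {mpoly K[n]}))^`M(b) = 0.
Proof.
move=> ab; rewrite /usubst raddf_sum big1 // => k _.
by rewrite /= mderivZ mpolyXn mderivX mulmnE mnm1E (negbTE ab) scale0r scaler0.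
Qed.

Lemma mcoeff_usubstX (q : {poly K}) (a : 'I_n) m :
  (usubst q ('X_a : {mpoly K[n]}))@_m =
    \sum_(k < size q) q`_k * ((U_(a) *+ k)%MM == m)%:R.
Proof.
rewrite /usubst raddf_sum; apply: eq_bigr => k _.
by rewrite /= mcoeffZ mpolyXn mcoeffX.
Qed.

Lemma mcoeff_usubstX_eq0 (q : {poly K}) (a : 'I_n) m : m != (U_(a) *+ mdeg m)%MM ->
  (usubst q ('X_a : {mpoly K[n]}))@_m = 0.
Proof.
move=> m_not_pow; rewrite mcoeff_usubstX big1 // => k _.
case: eqP => [Em|]; last by rewrite mulr0.
by move: m_not_pow; rewrite -Em mdegMn mdeg1 mul1n eqxx.
Qed.

End UnivariateSubstitution.

Section KellerComponent.
Variables (K : fieldType) (n : nat).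
Hypothesis char0 : [pchar K] =i pred0.

Lemma mulrSn_char0_eq0 (x : K) k : x *+ k.+1 = 0 -> x = 0.
Proof.
move/pcharf0P: char0 => natr0; rewrite -mulr_natr => /eqP.
by rewrite mulf_eq0 natr0 orbF => /eqP.
Qed.

(* A product with a nonzero constant is a unit, and units of K[x] are constants. *)
Lemma mul_eq_mpolyC (g C : {mpoly K[n]}) (c : K) : c != 0 -> g * C = c%:MP ->
  exists2 a : K, a != 0 & g = a%:MP.
Proof.
move=> c0 gC; have: g \is a GRing.unit.
  apply/unitrPr; exists (C * (c^-1)%:MP).
  by rewrite mulrA gC -mpolyCM mulfV.
by rewrite unfold_in => /andP[/eqP g_const]; rewrite unitfE; exists g@_0.
Qed.

Lemma keller_row_mderiv (F : polymap K n) (j i : 'I_n) : keller F ->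
  (forall b, b != i -> (tnth F j)^`M(b) = 0) ->
  exists2 c : K, c != 0 & (tnth F j)^`M(i) = c%:MP.
Proof.
move=> [c [c0 detF]] row_j.
rewrite (expand_det_row _ j) (bigD1 i) //= big1 ?addr0 in detF; last first.
  by move=> b bi; rewrite mxE row_j // mul0r.
by rewrite mxE in detF; apply: mul_eq_mpolyC detF.
Qed.

Lemma msize_usubstX_mderivC (q : {poly K}) (i : 'I_n) (c : K) :
  c != 0 -> (usubst q 'X_i)^`M(i) = c%:MP ->
  msize (usubst q ('X_i : {mpoly K[n]})) = 2%N.
Proof.
set f := usubst q 'X_i => c0 df.
have coef_df k : (f^`M(i))@_(U_(i) *+ k)%MM = f@_(U_(i) *+ k.+1)%MM *+ k.+1.
  by rewrite mcoeff_deriv mulmnE mnm1E eqxx mul1n mulmSr.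
have coef_high k : f@_(U_(i) *+ k.+2)%MM = 0.
  apply: (@mulrSn_char0_eq0 _ k.+1); rewrite -coef_df df mcoeffC.
  by rewrite -mdeg_eq0 mdegMn mdeg1 mul1n mulr0.
have coef_lin : f@_U_(i) = c.
  by have := coef_df 0%N; rewrite mulm0n mulm1n mulr1n df mcoeffC eqxx mulr1.
apply/eqP; rewrite eqn_leq; apply/andP; split.
  rewrite msizeE; apply/bigmax_leqP_seq => m; rewrite mcoeff_msupp => fm0 _.
  have Em : m = (U_(i) *+ mdeg m)%MM.
    by apply/eqP; apply: contraNT fm0 => /mcoeff_usubstX_eq0 ->.
  move: fm0; rewrite Em mdegMn mdeg1 mul1n.
  by case: (mdeg m) => [|[|k]] //; rewrite coef_high eqxx.
by rewrite -(mdeg1 i); apply: msize_mdeg_lt; rewrite mcoeff_msupp coef_lin.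
Qed.

Lemma keller_component_usubstX (q : {poly K}) (i : 'I_n) :
  keller_component (usubst q ('X_i : {mpoly K[n]})) ->
  msize (usubst q ('X_i : {mpoly K[n]})) = 2%N.
Proof.
move=> [F [j [kellerF Fj]]].
have row_j b : b != i -> (tnth F j)^`M(b) = 0.
  by rewrite Fj eq_sym; apply: mderiv_usubstX_neq.
have [c c0 df] := keller_row_mderiv kellerF row_j.
by apply: (msize_usubstX_mderivC c0); rewrite -Fj.
Qed.

End KellerComponent.

Section TameCoordinate.
Variables (K : fieldType) (n : nat).
Hypothesis char0 : [pchar K] =i pred0.
Implicit Types (p : {mpoly K[n]}) (q : {poly K}).

Lemma mderiv_eq0_msupp p k : p^`M(k) = 0 -> forall m, m \in msupp p -> m k = 0%N.
Proof.
move=> dp0 m; apply: contraTeq => mk0; rewrite mcoeff_msupp negbK.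
pose m' : 'X_{1..n} := [multinom (m a - (a == k))%N | a < n].
have -> : m = (m' + U_(k))%MM.
  apply/mnmP => a; rewrite mnmDE mnmE mnm1E [k == a]eq_sym.
  by case: eqP => [->|_]; rewrite ?subn0 ?addn0 // subnK // lt0n.
apply/eqP/(mulrSn_char0_eq0 char0 (k := m' k)).
by rewrite -mcoeff_deriv dp0 mcoeff0.
Qed.

Definition pm_shift (k : 'I_n) p : polymap K n :=
  [tuple (if a == k then 'X_a + p else 'X_a) | a < n].

Lemma elementary_pm_shift k p : p^`M(k) = 0 -> elementary (pm_shift k p).
Proof. by move=> dp0; exists k, p; split => //; apply: mderiv_eq0_msupp. Qed.

Lemma comp_mpolyX_tnth (a : 'I_n) (lq : n.-tuple {mpoly K[n]}) :
  'X_a \mPo lq = tnth lq a.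
Proof. by rewrite comp_mpolyXU -tnth_nth. Qed.

Lemma comp_pm_shift (a k : 'I_n) p :
  'X_a \mPo pm_shift k p = if a == k then 'X_a + p else 'X_a.
Proof. by rewrite comp_mpolyX_tnth tnth_mktuple. Qed.

Lemma tame_coordinate_X_add_usubst (i j : 'I_n) q p : j != i -> p^`M(j) = 0 ->
  tame_coordinate ('X_i + usubst q ('X_j + p)).
Proof.
move=> ji dp0; pose G := pm_comp (pm_id K n) (pm_shift i (usubst q 'X_j)).
exists (pm_comp G (pm_shift j p)), i; split.
  apply: tame_elem; last exact: elementary_pm_shift.
  by apply: tame_elem (tame_id _ _) _; apply/elementary_pm_shift/mderiv_usubstX_neq.
rewrite !tnth_mktuple comp_pm_shift eqxx comp_mpolyD comp_usubst.
by rewrite !comp_pm_shift eqxx eq_sym (negbTE ji).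
Qed.

End TameCoordinate.

Section LinearForm.
Variables (K : fieldType) (n : nat).
Implicit Types (l : {mpoly K[n]}) (q : {poly K}).

Lemma dhomog1E l : l \is 1.-homog -> l = \sum_(k < n) l@_U_(k) *: 'X_k.
Proof.
move=> homog_l; apply/mpolyP => m; rewrite raddf_sum /=.
under eq_bigr do rewrite mcoeffZ mcoeffX.
have [/mdeg1P [k /eqP ->]|mdeg_m] := boolP (mdeg m == 1%N).
  rewrite (bigD1 k) //= eqxx mulr1 big1 ?addr0 // => a ak.
  by rewrite eq_mnm1 (negbTE ak) mulr0.
rewrite big1; first by rewrite (dhomog_nemf_coeff homog_l).
move=> k _; case: eqP => [Ek|]; last by rewrite mulr0.
by move: mdeg_m; rewrite -Ek mdeg1.
Qed.

Lemma dhomog1_split (i : 'I_n) q l : l \is 1.-homog -> ~ in_Kxi i (usubst q l) ->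
  exists j c (p : {mpoly K[n]}), [/\ j != i, c != 0, p^`M(j) = 0 & l = c *: ('X_j + p)].
Proof.
move=> homog_l not_Kxi; have El := dhomog1E homog_l.
have [j /andP [ji c0]] : exists j, (j != i) && (l@_U_(j) != 0).
  apply/existsP; apply: contra_notT not_Kxi => /existsPn only_i.
  exists (\poly_(k < size q) (q`_k * l@_U_(i) ^+ k)); rewrite -usubstZ; congr usubst.
  rewrite {1}El (bigD1 i) //= big1 ?addr0 // => k ki.
  by move: (only_i k); rewrite ki negbK => /eqP ->; rewrite scale0r.
set c := l@_U_(j) in c0.
exists j, c, (c^-1 *: \sum_(k < n | k != j) l@_U_(k) *: 'X_k); split => //.
  rewrite mderivZ (raddf_sum (mderiv j)) big1 ?scaler0 // => k kj.
  by rewrite /= mderivZ mderivX_neq // scaler0.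
by rewrite scalerDr scalerA mulfV // scale1r {1}El (bigD1 j).
Qed.

End LinearForm.

Theorem proposition3p4 (K : fieldType) (n : nat) (i : 'I_n) (f : {mpoly K[n]})
  (q : {poly K}) (l : {mpoly K[n]}) :
  [pchar K] =i pred0 ->
  msize f != 2%N ->
  l \is 1.-homog ->
  f - 'X_i = usubst q l ->
  (in_Kxi i (f - 'X_i) -> ~ keller_component f) /\
  (~ in_Kxi i (f - 'X_i) -> tame_coordinate f).
Proof.
move=> char0 deg_f homog_l Eh; split.
  move=> [r Er] keller_f; apply/(negP deg_f)/eqP.
  have Ef : f = usubst (r + 'X) 'X_i by rewrite usubstD usubstX -Er subrK.
  by rewrite Ef in keller_f *; apply: keller_component_usubstX.
rewrite Eh => /(dhomog1_split homog_l) [j [c [p [ji c0 dp0 El]]]].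
have -> : f = 'X_i + usubst q l by rewrite -Eh addrC subrK.
by rewrite El usubstZ; apply: tame_coordinate_X_add_usubst.
Qed.
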